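(* In a pairing heap, insertion takes $O(1)$ amortized time with respect to the potential $\Phi$.
   Context: A pairing heap is a heap-ordered rooted ordered tree (the ''general view''): each node stores a key, has zero or more children ordered from left to right, and every child has a strictly larger key than its parent. It is stored in the ''binary view'' via the leftmost-child/right-sibling correspondence: the left child of $x$ in the binary view is the leftmost child of $x$ in the general view, and the right child of $x$ in the binary view is the next sibling to the right of $x$ in the general view. Pairing two heap-ordered trees makes the root with the larger key the leftmost child of the other root. Operations: make-heap returns an empty heap; get-min returns the root key; insert creates a new node, which becomes the root if the heap is empty and otherwise is paired with the root; decrease-key$(p,y)$ (with $y$ strictly less than the current key of the node $p$) sets the key to $y$ and, if the node is not the root, detaches it (with its general-view subtree) from its parent and pairs it with the root; delete-min removes the root, then (first pass) pairs the root's former children in consecutive pairs from left to right, then (second pass) repeatedly pairs the two rightmost remaining trees until one tree remains. The actual cost of an operation is $1$ plus the number of pairings it performs, and its amortized cost is its actual cost plus the resulting change in $\Phi$. The heap is assumed to arise from a sequence of such operations starting from an empty heap. Sticky size: $N$ is initially $1$; after every heap operation, if $n \ge 2N$ then $N$ is doubled, and if $n \le N/2$ then $N$ is halved, where $n$ is the current number of elements. Let $\lg = \log_2$. For a node $x$, $|x|$ is the number of nodes in the subtree rooted at $x$ in the binary view, and $x_L$, $x_R$ are its left and right children in the binary view (a missing child has size $0$). Node potential $\phi_x$: if $|x_L| > \lg N$ and $|x_R| > \lg N$, $x$ is large and $\phi_x = 400 + 100\lg|x|$; if $|x_L| \le \lg N < |x_R|$, $x$ is mixed and $\phi_x = 400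 + 100\frac{|x_L|}{\lg N}\lg|x|$ (symmetrically, if $|x_R| \le \lg N < |x_L|$, $\phi_x = 400 + 100\frac{|x_R|}{\lg N}\lg|x|$); if both $|x_L|,|x_R| \le \lg N$, $x$ is small and $\phi_x = 0$. Edge potential: an edge of the binary view joining a large node to its right child that is also large has potential $-7$; all other edges have potential $0$. $\Phi = 900|N-n| + \sum_x \phi_x + (\text{sum of edge potentials})$. *)

From Stdlib Require Import Reals List Arith Bool.
Import ListNotations.
Local Open Scope R_scope.

(* Binary view of a pairing heap: left child = leftmost child in the general
   view, right child = next sibling in the general view.  Keys are reals. *)
Inductive bt : Type :=
| Leaf : bt
| Node : R -> bt -> bt -> bt.

Fixpoint bsize (t : bt) : nat :=
  match t with Leaf => 0%nat | Node _ l r => S (bsize l + bsize r) end.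

(* Pairing of two heap-ordered trees (given as roots; their right children,
   i.e. siblings, are ignored): the root with the larger key becomes the
   leftmost child of the other root.  (On ties the first argument stays root.) *)
Definition link (a b : bt) : bt :=
  match a, b with
  | Leaf, _ => b
  | _, Leaf => a
  | Node ka la _, Node kb lb _ =>
      if Rlt_dec kb ka then Node kb (Node ka la lb) Leaf
      else Node ka (Node kb lb la) Leaf
  end.

Fixpoint siblings (t : bt) : list bt :=
  match t with Leaf => [] | Node k l r => Node k l Leaf :: siblings r end.

Fixpoint pass1 (s : list bt) : list bt * nat :=
  match s with
  | a :: b :: s' => let (r, c) := pass1 s' in (link a b :: r, S c)
  | _ => (s, 0%nat)
  end.

Fixpoint pass2 (s : list bt) : bt * nat :=
  match s with
  | [] => (Leaf, 0%nat)
  | [a] => (a, 0%nat)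
  | a :: s' => let (t, c) := pass2 s' in (link a t, S c)
  end.

(* subtree at a path (false = left, true = right) and replacement *)
Fixpoint subt (t : bt) (p : list bool) : bt :=
  match p, t with
  | [], _ => t
  | _, Leaf => Leaf
  | false :: p', Node _ l _ => subt l p'
  | true :: p', Node _ _ r => subt r p'
  end.

Fixpoint repl (t : bt) (p : list bool) (u : bt) : bt :=
  match p, t with
  | [], _ => u
  | _, Leaf => Leaf
  | false :: p', Node k l r => Node k (repl l p' u) r
  | true :: p', Node k l r => Node k l (repl r p' u)
  end.

(* Heap operations.  A node is designated by its path in the binary view. *)
Inductive op : Type :=
| Insert (k : R)
| GetMin
| DeleteMin
| DecreaseKey (p : list bool) (y : R).

(* new heap and number of pairings performed; None = operation not applicable *)
Definition heap_op (o : op) (h : bt) : option (bt * nat) :=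
  match o with
  | Insert k =>
      match h with
      | Leaf => Some (Node k Leaf Leaf, 0%nat)
      | _ => Some (link h (Node k Leaf Leaf), 1%nat)
      end
  | GetMin => match h with Leaf => None | _ => Some (h, 0%nat) end
  | DeleteMin =>
      match h with
      | Leaf => None
      | Node _ l _ =>
          let (s, c1) := pass1 (siblings l) in
          let (t, c2) := pass2 s in Some (t, (c1 + c2)%nat)
      end
  | DecreaseKey p y =>
      match subt h p with
      | Leaf => None
      | Node k l r =>
          if Rlt_dec y k then
            match p with
            | [] => Some (Node y l r, 0%nat)
            | _ => Some (link (repl h p r) (Node y l Leaf), 1%nat)
            end
          else None
      end
  end.

(* sticky size update (N stays a positive power of two) *)
Definition sticky (N n : nat) : nat :=
  if Nat.leb (2 * N) n then (2 * N)%nat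
  else if (Nat.leb (2 * n) N && Nat.leb 2 N)%bool then Nat.div N 2
  else N.

Definition state := (nat * bt)%type.   (* (N, heap) *)

Definition run (o : op) (s : state) : option (state * nat) :=
  match heap_op o (snd s) with
  | None => None
  | Some (h', c) => Some ((sticky (fst s) (bsize h'), h'), c)
  end.

Inductive reachable : state -> Prop :=
| reach0 : reachable (1%nat, Leaf)
| reachS (s s' : state) (o : op) (c : nat) :
    reachable s -> run o s = Some (s', c) -> reachable s'.

Definition lg (x : R) : R := ln x / ln 2.

Definition node_phi (lgN : R) (sl sr st : nat) : R :=
  let a := INR sl in let b := INR sr in
  if Rlt_dec lgN a then
    (if Rlt_dec lgN b then 400 + 100 * lg (INR st)
     else 400 + 100 * (b / lgN) * lg (INR st))
  else
    (if Rlt_dec lgN b then 400 + 100 * (a / lgN) * lg (INR st)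
     else 0).

Definition large_b (lgN : R) (t : bt) : bool :=
  match t with
  | Leaf => false
  | Node _ l r =>
      if Rlt_dec lgN (INR (bsize l)) then
        (if Rlt_dec lgN (INR (bsize r)) then true else false)
      else false
  end.

Fixpoint pot (lgN : R) (t : bt) : R :=
  match t with
  | Leaf => 0
  | Node k l r =>
      node_phi lgN (bsize l) (bsize r) (S (bsize l + bsize r))
      + (if (large_b lgN (Node k l r) && large_b lgN r)%bool then -7 else 0)
      + pot lgN l + pot lgN r
  end.

Definition Phi (s : state) : R :=
  900 * Rabs (INR (fst s) - INR (bsize (snd s))) + pot (lg (INR (fst s))) (snd s).

Definition amortized (o : op) (s : state) : option R :=
  match run o s with
  | Some (s', c) => Some (1 + INR c + Phi s' - Phi s)
  | None => None
  end.

From Stdlib Require Import Reals Lra Lia List Bool.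
Local Open Scope R_scope.

(* Insertion links the root with a one-node tree: at a fixed [N] only two nodes change,
   each becoming a node with an empty child and hence of potential at most 400, while the
   size grows by one.  In a reachable state the root has no sibling and [n < 2N], [N < 2n]
   (unless [N = 1]), so [N] can only double, and only when [n = 2N - 1].  Raising [lg N]
   lowers every node potential and loses at most the [-7] of each of the [2N] edges, which
   the [900 (N - 1)] released from [900 |N - n|] pays for. *)

Lemma lg_le_compat (x y : R) : 1 <= x -> x <= y -> lg x <= lg y.
Proof.
  intros Hx Hxy. unfold lg, Rdiv. apply Rmult_le_compat_r.
  - left. apply Rinv_0_lt_compat. rewrite <- ln_1. apply ln_increasing; lra.
  - destruct (Req_dec x y) as [->|Hne]; [lra|]. left. apply ln_increasing; lra.
Qed.

Lemma lg_nonneg (x : R) : 1 <= x -> 0 <= lg x.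
Proof.
  intros Hx. replace 0 with (lg 1) by (unfold lg; rewrite ln_1; unfold Rdiv; ring).
  apply lg_le_compat; lra.
Qed.

Lemma lg_INR_nonneg (n : nat) : (1 <= n)%nat -> 0 <= lg (INR n).
Proof. intros Hn. apply lg_nonneg. apply (le_INR 1) in Hn. simpl in Hn. lra. Qed.

(* [b / L] is the weight [|x_R| / lg N] of a mixed node; Rocq's [b / 0 = 0] is harmless
   here since [b <= L]. *)
Lemma mixed_weight_bounds (b L : R) : 0 <= b <= L -> 0 <= b / L <= 1.
Proof.
  intros Hb. destruct (Req_dec L 0) as [->|HL].
  - unfold Rdiv. rewrite Rinv_0. lra.
  - split.
    + apply Rmult_le_pos; [lra|]. left. apply Rinv_0_lt_compat. lra.
    + apply (Rmult_le_reg_r L); [lra|]. unfold Rdiv.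
      rewrite Rmult_assoc, Rinv_l by lra. lra.
Qed.

Lemma mixed_weight_antimono (b L L' : R) : 0 <= b <= L -> L <= L' -> b / L' <= b / L.
Proof.
  intros Hb HLL. destruct (Req_dec b 0) as [->|Hb0].
  - unfold Rdiv. rewrite !Rmult_0_l. lra.
  - unfold Rdiv. apply Rmult_le_compat_l; [lra|]. apply Rinv_le_contravar; lra.
Qed.

Lemma node_phi_nonneg (L : R) (a b s : nat) : 0 <= L -> 0 <= node_phi L a b (S s).
Proof.
  intros HL. pose proof (lg_INR_nonneg (S s) ltac:(lia)) as Hg.
  pose proof (pos_INR a). pose proof (pos_INR b).
  unfold node_phi.
  destruct (Rlt_dec L (INR a)), (Rlt_dec L (INR b)); try lra.
  - pose proof (mixed_weight_bounds (INR b) L ltac:(lra)).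
    assert (0 <= INR b / L * lg (INR (S s))) by (apply Rmult_le_pos; lra). lra.
  - pose proof (mixed_weight_bounds (INR a) L ltac:(lra)).
    assert (0 <= INR a / L * lg (INR (S s))) by (apply Rmult_le_pos; lra). lra.
Qed.

Lemma node_phi_antimono (L L' : R) (a b s : nat) : 0 <= L -> L <= L' ->
  node_phi L' a b (S s) <= node_phi L a b (S s).
Proof.
  intros HL HLL. pose proof (lg_INR_nonneg (S s) ltac:(lia)) as Hg.
  pose proof (pos_INR a). pose proof (pos_INR b).
  pose proof (node_phi_nonneg L a b s HL).
  unfold node_phi in *. set (g := lg (INR (S s))) in *.
  destruct (Rlt_dec L' (INR a)), (Rlt_dec L' (INR b)),
    (Rlt_dec L (INR a)), (Rlt_dec L (INR b)); try lra.
  (* a node mixed at [L'] is large or mixed at [L]: its weight is at most 1, resp. its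
     weight at [L] *)
  all: match goal with
       | |- 400 + 100 * (?c / _) * _ <= _ =>
           pose proof (mixed_weight_bounds c L' ltac:(lra));
           try pose proof (mixed_weight_antimono c L L' ltac:(lra) HLL)
       end; nra.
Qed.

Lemma node_phi_empty_child_le (L : R) (a b s : nat) : 0 <= L ->
  (a = 0 \/ b = 0)%nat -> node_phi L a b s <= 400.
Proof.
  intros HL [-> | ->]; unfold node_phi; simpl (INR 0);
    destruct (Rlt_dec L 0); try lra;
    destruct (Rlt_dec L _); unfold Rdiv; lra.
Qed.

Lemma pot_Node (L k : R) (l r : bt) : pot L (Node k l r) =
  node_phi L (bsize l) (bsize r) (S (bsize l + bsize r))
  + (if (large_b L (Node k l r) && large_b L r)%bool then -7 else 0)
  + pot L l + pot L r.
Proof. reflexivity. Qed.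

Lemma edge_pot_bounds (c : bool) : -7 <= (if c then -7 else 0) <= 0.
Proof. destruct c; lra. Qed.

Lemma pot_Node_empty_child_le (L k : R) (l r : bt) : 0 <= L ->
  (l = Leaf \/ r = Leaf) -> pot L (Node k l r) <= 400 + pot L l + pot L r.
Proof.
  intros HL Hlr. rewrite pot_Node.
  pose proof (edge_pot_bounds (large_b L (Node k l r) && large_b L r)).
  assert (node_phi L (bsize l) (bsize r) (S (bsize l + bsize r)) <= 400).
  { apply node_phi_empty_child_le; [exact HL|].
    destruct Hlr as [-> | ->]; simpl; auto. }
  lra.
Qed.

Lemma pot_Node_no_sibling_ge (L k : R) (l : bt) : 0 <= L ->
  pot L l <= pot L (Node k l Leaf).
Proof.
  intros HL. rewrite pot_Node. simpl (large_b L Leaf). rewrite andb_false_r.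
  pose proof (node_phi_nonneg L (bsize l) 0 (bsize l + 0) HL). simpl in *. lra.
Qed.

Lemma pot_lgN_increase_le (L L' : R) (t : bt) : 0 <= L -> L <= L' ->
  pot L' t <= pot L t + 7 * INR (bsize t).
Proof.
  intros HL HLL. induction t as [|k l IHl r IHr]; [simpl; lra|rewrite !pot_Node].
  pose proof (node_phi_antimono L L' (bsize l) (bsize r) (bsize l + bsize r) HL HLL).
  pose proof (edge_pot_bounds (large_b L (Node k l r) && large_b L r)).
  pose proof (edge_pot_bounds (large_b L' (Node k l r) && large_b L' r)).
  simpl bsize. rewrite S_INR, plus_INR. lra.
Qed.

Definition no_sibling (h : bt) : Prop :=
  match h with Leaf => True | Node _ _ r => r = Leaf end.

Lemma pot_link_singleton_le (L k : R) (h : bt) : 0 <= L -> no_sibling h ->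
  pot L (link h (Node k Leaf Leaf)) <= pot L h + 800.
Proof.
  intros HL Hh. destruct h as [|kh l r]; cbn [link no_sibling] in Hh |- *.
  - pose proof (pot_Node_empty_child_le L k Leaf Leaf HL (or_introl eq_refl)).
    change (pot L Leaf) with 0 in *. lra.
  - subst r. destruct (Rlt_dec k kh).
    + pose proof (pot_Node_empty_child_le L k (Node kh l Leaf) Leaf HL (or_intror eq_refl)).
      change (pot L Leaf) with 0 in *. lra.
    + pose proof (pot_Node_empty_child_le L kh (Node k Leaf l) Leaf HL (or_intror eq_refl)).
      pose proof (pot_Node_empty_child_le L k Leaf l HL (or_introl eq_refl)).
      pose proof (pot_Node_no_sibling_ge L kh l HL).
      change (pot L Leaf) with 0 in *. lra.
Qed.

Lemma no_sibling_link (a b : bt) : no_sibling a -> no_sibling b -> no_sibling (link a b).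
Proof.
  destruct a as [|ka la ra], b as [|kb lb rb]; cbn [link]; auto.
  destruct (Rlt_dec kb ka); reflexivity.
Qed.

Lemma bsize_link (a b : bt) : no_sibling a -> no_sibling b ->
  bsize (link a b) = (bsize a + bsize b)%nat.
Proof.
  destruct a as [|ka la ra], b as [|kb lb rb]; cbn [link no_sibling]; intros Ha Hb;
    try (simpl; lia).
  subst. destruct (Rlt_dec kb ka); simpl; lia.
Qed.

Definition forest_size (s : list bt) : nat := list_sum (map bsize s).

Lemma siblings_no_sibling (t : bt) :
  Forall no_sibling (siblings t) /\ forest_size (siblings t) = bsize t.
Proof.
  induction t as [|k l _ r [IHall IHsize]]; [split; auto|].
  split; [constructor; simpl; auto|].
  unfold forest_size in *; simpl. lia.
Qed.

Lemma pass1_no_sibling : forall s : list bt, Forall no_sibling s ->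
  Forall no_sibling (fst (pass1 s)) /\ forest_size (fst (pass1 s)) = forest_size s.
Proof.
  fix IH 1. intros [|a [|b s]] Hs; cbn [pass1]; auto.
  inversion_clear Hs as [|? ? Ha Hs1]. inversion_clear Hs1 as [|? ? Hb Hs2].
  destruct (IH s Hs2) as [Hall Hsize].
  destruct (pass1 s) as [r c]; cbn [fst] in *.
  split; [constructor; auto using no_sibling_link|].
  unfold forest_size in *; simpl. rewrite bsize_link by assumption. lia.
Qed.

Lemma pass2_no_sibling (s : list bt) : Forall no_sibling s ->
  no_sibling (fst (pass2 s)) /\ bsize (fst (pass2 s)) = forest_size s.
Proof.
  induction s as [|a s IH]; intros Hs; [simpl; auto|].
  inversion_clear Hs as [|? ? Ha Hs'].
  destruct s as [|b s]; [unfold forest_size; simpl; split; auto; lia|].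
  specialize (IH Hs').
  change (pass2 (a :: b :: s)) with (let (t, c) := pass2 (b :: s) in (link a t, S c)).
  destruct (pass2 (b :: s)) as [t c]; cbn [fst] in *. destruct IH as [Ht Hsize].
  split; [auto using no_sibling_link|].
  rewrite bsize_link by assumption. unfold forest_size in *; simpl in *. lia.
Qed.

Lemma subt_Leaf (p : list bool) : subt Leaf p = Leaf.
Proof. destruct p as [|[] p]; reflexivity. Qed.

Lemma bsize_repl_subt (h : bt) (p : list bool) (k : R) (l r : bt) :
  subt h p = Node k l r -> (bsize (repl h p r) + bsize l + 1)%nat = bsize h.
Proof.
  revert h; induction p as [|[] p IH]; intros [|kh lh rh] Hsub;
    cbn [subt repl] in Hsub |- *; rewrite ?subt_Leaf in Hsub; try discriminate.
  - injection Hsub as <- <- <-. simpl. lia.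
  - specialize (IH rh Hsub). simpl. lia.
  - specialize (IH lh Hsub). simpl. lia.
Qed.

Lemma heap_op_Insert (k : R) (h : bt) :
  exists c, (c <= 1)%nat /\ heap_op (Insert k) h = Some (link h (Node k Leaf Leaf), c).
Proof. destruct h; eexists; split; [| reflexivity | | reflexivity]; auto. Qed.

Lemma heap_op_no_sibling (o : op) (h h' : bt) (c : nat) :
  no_sibling h -> heap_op o h = Some (h', c) ->
  no_sibling h' /\ (bsize h' <= bsize h + 1)%nat /\ (bsize h <= bsize h' + 1)%nat.
Proof.
  intros Hh Hop. assert (Hroot : forall k l, no_sibling (Node k l Leaf)) by reflexivity.
  destruct o as [k| | |p y]; cbn [heap_op] in Hop.
  - destruct (heap_op_Insert k h) as (c' & _ & Hins).
    cbn [heap_op] in Hins. rewrite Hins in Hop. injection Hop as <- _.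
    rewrite bsize_link by auto. simpl. auto using no_sibling_link with arith.
  - destruct h; [discriminate|]. injection Hop as <- _. split; [exact Hh | lia].
  - destruct h as [|kh l r]; [discriminate|]. cbn [no_sibling] in Hh. subst r.
    destruct (siblings_no_sibling l) as [Hall Hsize].
    destruct (pass1_no_sibling _ Hall) as [Hall1 Hsize1].
    destruct (pass1 (siblings l)) as [s c1]; cbn [fst] in *.
    destruct (pass2_no_sibling _ Hall1) as [Ht Hsize2].
    destruct (pass2 s) as [t c2]; cbn [fst] in *. injection Hop as <- _.
    simpl. split; [auto | lia].
  - destruct (subt h p) as [|k l r] eqn:Hsub; [discriminate|].
    destruct (Rlt_dec y k); [|discriminate].
    destruct p as [|b p].
    + injection Hop as <- _. destruct h; cbn [subt] in Hsub; [discriminate|].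
      injection Hsub as -> -> ->. simpl; auto with arith.
    + injection Hop as <- _. pose proof (bsize_repl_subt _ _ _ _ _ Hsub) as Hsize.
      assert (Hrepl : no_sibling (repl h (b :: p) r)).
      { destruct h as [|kh lh rh]; [rewrite subt_Leaf in Hsub; discriminate|].
        cbn [no_sibling] in Hh. subst rh. destruct b; [|reflexivity].
        (* a path turning right at the root runs into [Leaf] *)
        change (subt Leaf p = Node k l r) in Hsub. rewrite subt_Leaf in Hsub. discriminate. }
      rewrite bsize_link by auto. simpl. split; [auto using no_sibling_link | lia].
Qed.

Definition sticky_inv (N n : nat) : Prop :=
  (1 <= N)%nat /\ (n < 2 * N)%nat /\ (N = 1%nat \/ (N < 2 * n)%nat).

Lemma sticky_inv_step (N n n' : nat) : sticky_inv N n ->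
  (n' <= n + 1)%nat -> (n <= n' + 1)%nat -> sticky_inv (sticky N n') n'.
Proof.
  unfold sticky_inv, sticky. intros (HN & Hlt & Hgt) Hup Hdown.
  pose proof (Nat.div_mod_eq N 2). pose proof (Nat.mod_upper_bound N 2).
  destruct (Nat.leb_spec (2 * N) n'), (Nat.leb_spec (2 * n') N), (Nat.leb_spec 2 N);
    cbn [andb]; lia.
Qed.

Lemma reachable_inv (s : state) : reachable s ->
  sticky_inv (fst s) (bsize (snd s)) /\ no_sibling (snd s).
Proof.
  induction 1 as [|[N h] s' o c _ [Hinv Hh] Hrun].
  - unfold sticky_inv. simpl. auto with arith.
  - unfold run in Hrun. cbn [fst snd] in *.
    destruct (heap_op o h) as [[h' c']|] eqn:Hop; [|discriminate].
    injection Hrun as <- _.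
    destruct (heap_op_no_sibling _ _ _ _ Hh Hop) as (Hh' & Hup & Hdown).
    split; [apply sticky_inv_step with (n := bsize h) | ]; assumption.
Qed.

Lemma sticky_succ (N n : nat) : sticky_inv N n ->
  sticky N (S n) = N \/ (sticky N (S n) = (2 * N)%nat /\ S n = (2 * N)%nat).
Proof.
  unfold sticky_inv, sticky. intros (HN & Hlt & Hgt).
  destruct (Nat.leb_spec (2 * N) (S n)), (Nat.leb_spec (2 * S n) N), (Nat.leb_spec 2 N);
    cbn [andb]; lia.
Qed.

Lemma Phi_succ_le (N : nat) (t t' : bt) : sticky_inv N (bsize t) ->
  bsize t' = S (bsize t) ->
  (forall L, 0 <= L -> pot L t' <= pot L t + 800) ->
  Phi (sticky N (bsize t'), t') <= Phi (N, t) + 1700.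
Proof.
  intros Hinv Hsize Hpot. unfold Phi; cbn [fst snd]. rewrite Hsize.
  set (n := bsize t) in *.
  assert (HL : 0 <= lg (INR N)) by (apply lg_INR_nonneg, Hinv).
  pose proof (Hpot _ HL) as Hpot'.
  assert (HN : 1 <= INR N) by (apply (le_INR 1), Hinv).
  destruct (sticky_succ N n Hinv) as [-> | [-> Hdouble]].
  - rewrite S_INR. unfold Rabs. destruct (Rcase_abs _), (Rcase_abs _); lra.
  - rewrite Hdouble, Rminus_diag, Rabs_R0.
    assert (H2N : INR (2 * N) = 2 * INR N) by (rewrite mult_INR; simpl; ring).
    set (L' := lg (INR (2 * N))).
    assert (HL' : lg (INR N) <= L') by (apply lg_le_compat; lra).
    pose proof (pot_lgN_increase_le _ _ t' HL HL') as Hshift.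
    rewrite Hsize, Hdouble, H2N in Hshift.
    apply (f_equal INR) in Hdouble. rewrite S_INR, H2N in Hdouble.
    pose proof (Rle_abs (INR n - INR N)) as Habs. rewrite Rabs_minus_sym in Habs.
    lra.
Qed.

Theorem lemma2 :
  exists C : R, forall (s : state) (k a : R),
    reachable s -> amortized (Insert k) s = Some a -> a <= C.
Proof.
  exists 1702. intros [N h] k a Hreach Ha.
  destruct (reachable_inv _ Hreach) as [Hinv Hh]; cbn [fst snd] in *.
  destruct (heap_op_Insert k h) as (c & Hc & Hop).
  unfold amortized, run in Ha. cbn [snd] in Ha. rewrite Hop in Ha.
  injection Ha as <-.
  assert (Hsize : bsize (link h (Node k Leaf Leaf)) = S (bsize h)).
  { rewrite bsize_link by (assumption || reflexivity). simpl. lia. }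
  pose proof (Phi_succ_le N h _ Hinv Hsize
    (fun L HL => pot_link_singleton_le L k h HL Hh)) as HPhi.
  apply le_INR in Hc. simpl INR in Hc. lra.
Qed.
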